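(* Let $G_1$ and $G_2$ be two disjoint $(k+1)$-critical hypergraphs with $k\ge2$, let $\tilde e\in E(G_1)$ and $\tilde v\in V(G_2)$ be arbitrary, and let $s$ be an admissible map for $(\tilde e,G_2,\tilde v)$. Let $G=S(G_1,\tilde e,G_2,\tilde v,s)$ and $G_2'=G[(V(G_2)\setminus\{\tilde v\})\cup\tilde e]$. Assume that for every $k$-coloring $\varphi$ of $G[\tilde e]$ with $|\varphi(\tilde e)|\ge2$ there is a $k$-coloring $\varphi'$ of $G_2'$ whose restriction to $\tilde e$ equals $\varphi$. Then $G$ is $(k+1)$-critical.
   Context: A hypergraph is a pair $G=(V,E)$ of finite sets with $E\subseteq 2^V$ and $|e|\ge2$ for all $e\in E$. A $k$-coloring is a map $V\to\{1,\dots,k\}$ such that every edge contains two vertices of different colors; $\chi$ is the chromatic number. $G$ is $(k+1)$-critical if $\chi(G)=k+1$ but $\chi(H)\le k$ for every proper subhypergraph $H$. $G[X]$ has vertex set $X$ and the edges of $G$ contained in $X$. $\partial_G(v)$ is the set of edges containing $v$. Splitting: let $G_1,G_2$ be disjoint hypergraphs, $\tilde e\in E(G_1)$, $\tilde v\in V(G_2)$, and $s:\partial_{G_2}(\tilde v)\to 2^{\tilde e}$ a map (called admissible) with $s(e)\ne\varnothing$ for all $e$ and $\bigcup_{e}s(e)=\tilde e$. Then $S(G_1,\tilde e,G_2,\tilde v,s)$ is the hypergraph with vertex set $V(G_1)\cup(V(G_2)\setminus\{\tilde v\})$ and edge set $(E(G_1)\setminus\{\tilde e\})\cup(E(G_2)\setminus\partial_{G_2}(\tilde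 v))\cup\{(e\setminus\{\tilde v\})\cup s(e): e\in\partial_{G_2}(\tilde v)\}$. *)

From mathcomp Require Import all_boot.
Set Implicit Arguments. Unset Strict Implicit. Unset Printing Implicit Defensive.

Record hypergraph (T : finType) := Hypergraph {
  hV : {set T};
  hE : {set {set T}} }.

Section Hyp.
Variable T : finType.

Definition is_hypergraph (G : hypergraph T) : Prop :=
  forall e, e \in hE G -> e \subset hV G /\ 2 <= #|e|.

(* A k-coloring: a map V -> {1..k} (given by a map T -> nat, values outside
   V irrelevant) such that every edge contains two vertices of different
   colours. *)
Definition is_coloring (G : hypergraph T) (k : nat) (phi : T -> nat) : Prop :=
  (forall x, x \in hV G -> 1 <= phi x <= k) /\
  (forall e, e \in hE G -> exists x y, [/\ x \in e, y \in e & phi x != phi y]).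

Definition colorable (G : hypergraph T) (k : nat) : Prop :=
  exists phi, is_coloring G k phi.

Definition is_chromatic_number (G : hypergraph T) (n : nat) : Prop :=
  colorable G n /\ forall m, colorable G m -> n <= m.

Definition subhypergraph (H G : hypergraph T) : Prop :=
  is_hypergraph H /\ hV H \subset hV G /\ hE H \subset hE G.

Definition proper_subhypergraph (H G : hypergraph T) : Prop :=
  subhypergraph H G /\ H <> G.

Definition critical (G : hypergraph T) (k : nat) : Prop :=
  is_hypergraph G /\ is_chromatic_number G k.+1 /\
  forall H, proper_subhypergraph H G ->
    exists m, is_chromatic_number H m /\ m <= k.

Definition induced (G : hypergraph T) (X : {set T}) : hypergraph T :=
  Hypergraph X [set e in hE G | e \subset X].

Definition boundary (G : hypergraph T) (v : T) : {set {set T}} :=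
  [set e in hE G | v \in e].

Definition admissible (et : {set T}) (G2 : hypergraph T) (v : T)
    (s : {set T} -> {set T}) : Prop :=
  (forall e, e \in boundary G2 v -> s e \subset et /\ s e != set0) /\
  \bigcup_(e in boundary G2 v) s e = et.

Definition splitting (G1 : hypergraph T) (et : {set T}) (G2 : hypergraph T)
    (v : T) (s : {set T} -> {set T}) : hypergraph T :=
  Hypergraph (hV G1 :|: (hV G2 :\ v))
    ((hE G1 :\ et) :|: (hE G2 :\: boundary G2 v)
       :|: [set (e :\ v) :|: s e | e in boundary G2 v]).

End Hyp.

From mathcomp Require Import all_boot.
From Stdlib Require Import Classical.
Set Implicit Arguments. Unset Strict Implicit. Unset Printing Implicit Defensive.

(* Proof idea: G is not k-colorable, since a k-coloring of G restricts to a
   k-coloring of G1 - e~, in which e~ must be monochromatic by criticality of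
   G1; giving v~ that color yields a k-coloring of G2.  Deleting any edge f of
   G leaves a k-colorable hypergraph: if f comes from an edge h of G2, color
   G2 - h and G1 - e~ (where e~ is monochromatic) and permute the colors on G1
   so that e~ receives the color of v~; if f <> e~ is an edge of G1, then e~ is
   bichromatic in a k-coloring of G1 - f, and the hypothesis extends that
   coloring of e~ to G2'.  As moreover no vertex of G is isolated, this makes
   G (k+1)-critical. *)

Section Colorings.
Variable T : finType.
Implicit Types (G H : hypergraph T) (A B e f g : {set T}) (phi chi : T -> nat).

Definition bichromatic phi A := exists x y, [/\ x \in A, y \in A & phi x != phi y].

Definition del_edge G f := Hypergraph (hV G) (hE G :\ f).

Lemma exists_other A x : 1 < #|A| -> exists2 y, y \in A & y != x.
Proof.
case/card_gt1P => a [b [aA bA nab]].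
by have [eax | ] := eqVneq a x; [exists b; rewrite // -eax eq_sym | exists a].
Qed.

Lemma bichromatic_transfer phi chi A B :
  (forall x, x \in A -> exists2 y, y \in B & chi y = phi x) ->
  bichromatic phi A -> bichromatic chi B.
Proof.
move=> AB [x [y [xA yA nxy]]].
have [x' x'B ex] := AB x xA; have [y' y'B ey] := AB y yA.
by exists x', y'; rewrite ex ey.
Qed.

Lemma bichromatic_subset phi A B :
  A \subset B -> bichromatic phi A -> bichromatic phi B.
Proof. by move=> /subsetP AB; apply: bichromatic_transfer => x /AB; exists x. Qed.

Lemma bichromatic_eq_in phi chi A :
  {in A, phi =1 chi} -> bichromatic phi A -> bichromatic chi A.
Proof. by move=> eq; apply: bichromatic_transfer => x xA; exists x; rewrite ?eq. Qed.

Lemma bichromatic_comp phi chi A (f : nat -> nat) :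
  injective f -> {in A, chi =1 f \o phi} -> bichromatic phi A -> bichromatic chi A.
Proof.
by move=> inj_f eq [x [y [xA yA nxy]]]; exists x, y; rewrite !eq //= (inj_eq inj_f).
Qed.

Lemma bichromatic_undup_size phi A :
  bichromatic phi A -> 2 <= size (undup [seq phi x | x <- enum A]).
Proof.
move=> [x [y [xA yA nxy]]].
apply: (@uniq_leq_size _ [:: phi x; phi y]); first by rewrite /= inE nxy.
by move=> c; rewrite !inE mem_undup => /orP[]/eqP->; apply: map_f; rewrite mem_enum.
Qed.

Lemma colorable_mono G m n : m <= n -> colorable G m -> colorable G n.
Proof.
move=> mn [phi [range edges]]; exists phi; split=> // x /range /andP[-> xm].
exact: leq_trans xm mn.
Qed.

Lemma is_coloring_sub G H k phi :
  hV H \subset hV G -> hE H \subset hE G -> is_coloring G k phi -> is_coloring H k phi.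
Proof.
by move=> /subsetP sV /subsetP sE [range edges]; split=> [x /sV /range | e /sE /edges].
Qed.

Lemma colorable_chromatic_number G n :
  colorable G n -> exists m, is_chromatic_number G m /\ m <= n.
Proof.
elim/ltn_ind: n => n IH Gn.
have [[m [mn Gm]] | no_less] := classic (exists m, m < n /\ colorable G m).
  have [m' [chi_m' m'm]] := IH m mn Gm.
  by exists m'; split=> //; apply: leq_trans m'm (ltnW mn).
exists n; split=> //; split=> // m Gm; rewrite leqNgt; apply/negP=> mn.
by apply: no_less; exists m.
Qed.

Lemma colorable_del_edge G k f :
  is_hypergraph G -> f \in hE G -> colorable (del_edge G f) k -> colorable G k.+1.
Proof.
move=> hypG fE [phi [range edges]].
have /card_gt0P [x xf] : 0 < #|f| by case: (hypG f fE) => _ /ltnW.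
exists (fun y => if y == x then k.+1 else phi y); split.
  move=> y yV; case: eqP => _; first by rewrite leqnn.
  by case/andP: (range y yV) => -> /leqW.
move=> g gE; have [gV g2] := hypG g gE.
case xg: (x \in g).
  have [y yg yx] := exists_other x g2.
  exists x, y; rewrite eqxx (negbTE yx); split=> //.
  by apply: contraTneq (range y (subsetP gV y yg)) => <-; rewrite ltnn andbF.
have gf : g != f by apply: contraFneq xg => ->.
apply: bichromatic_eq_in (edges g _); last by rewrite in_setD1 gf.
by move=> y yg /=; case: eqP => // exy; rewrite -exy yg in xg.
Qed.

Lemma proper_subhypergraph_missing_edge G H :
  (forall x, x \in hV G -> exists2 f, f \in hE G & x \in f) ->
  proper_subhypergraph H G -> exists2 f, f \in hE G & f \notin hE H.
Proof.
move=> covered [[hypH [sV sE]] neqHG].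
have [sE' | /subsetPn [f fE fH]] := boolP (hE G \subset hE H); last by exists f.
have eE : hE H = hE G by apply/eqP; rewrite eqEsubset sE.
have [sV' | /subsetPn [x xG xH]] := boolP (hV G \subset hV H); last first.
  have [f fE xf] := covered x xG; rewrite -eE in fE.
  by rewrite (subsetP (hypH f fE).1 x xf) in xH.
have eV : hV H = hV G by apply/eqP; rewrite eqEsubset sV.
by case: neqHG; case: H {hypH sV sE sE' sV'} eE eV => /= ? ? -> ->; case: G {covered}.
Qed.

Lemma critical_of_del_edge_colorable G k :
  is_hypergraph G -> ~ colorable G k ->
  (forall x, x \in hV G -> exists2 f, f \in hE G & x \in f) ->
  (forall f, f \in hE G -> colorable (del_edge G f) k) ->
  critical G k.
Proof.
move=> hypG not_colG covered del_colG.
have colG : colorable G k.+1.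
  have [noE | /set0Pn [f fE]] := eqVneq (hE G) set0.
    by exists (fun=> 1); split=> [// | e]; rewrite noE inE.
  exact: colorable_del_edge fE (del_colG f fE).
split=> //; split.
  split=> // m colGm; rewrite ltnNge; apply/negP => mk.
  exact/not_colG/(colorable_mono mk).
move=> H subH; have [[_ [sV sE]] _] := subH.
have [f fE fH] := proper_subhypergraph_missing_edge covered subH.
have [phi colphi] := del_colG f fE.
apply: (@colorable_chromatic_number _ k); exists phi; apply: is_coloring_sub colphi => //=.
apply/subsetP => g gH; rewrite in_setD1 (subsetP sE g gH) andbT.
by apply: contraNneq fH => <-.
Qed.

Section Critical.
Variables (G : hypergraph T) (k : nat).
Hypothesis critG : critical G k.

Lemma critical_not_colorable : ~ colorable G k.
Proof. by case: critG => _ [[_ minG] _] /minG; rewrite ltnn. Qed.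

Lemma critical_proper_colorable H : proper_subhypergraph H G -> colorable H k.
Proof.
by case: critG => _ [_ propG] /propG [m [[colHm _] mk]]; apply: colorable_mono colHm.
Qed.

Lemma critical_del_edge_colorable f : f \in hE G -> colorable (del_edge G f) k.
Proof.
move=> fE; apply: critical_proper_colorable; split.
  split; last by split=> //=; apply: subD1set.
  by move=> e; rewrite /= in_setD1 => /andP[_ /critG.1].
by move/(congr1 (@hE T))/setP/(_ f); rewrite /= setD11 fE.
Qed.

Lemma critical_monochromatic f phi :
  f \in hE G -> is_coloring (del_edge G f) k phi -> {in f &, forall x y, phi x = phi y}.
Proof.
move=> fE [range edges] x y xf yf; have [// | nxy] := eqVneq (phi x) (phi y).
case: critical_not_colorable; exists phi; split=> // g gE.
have [-> | gf] := eqVneq g f; first by exists x, y.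
by apply: edges; rewrite in_setD1 gf.
Qed.

Lemma critical_edges_antichain f g :
  f \in hE G -> g \in hE G -> f \subset g -> f = g.
Proof.
move=> fE gE fg; have [// | nfg] := eqVneq f g.
have [phi [range edges]] := critical_del_edge_colorable gE.
case: critical_not_colorable; exists phi; split=> // h hE.
have [-> | hg] := eqVneq h g; last by apply: edges; rewrite in_setD1 hg.
by apply: bichromatic_subset fg _; apply: edges; rewrite in_setD1 nfg.
Qed.

Lemma critical_no_isolated x :
  0 < k -> x \in hV G -> exists2 f, f \in hE G & x \in f.
Proof.
move=> k_gt0 xV; apply: NNPP => isolated.
have notin_edges f : f \in hE G -> x \notin f.
  by move=> fE; apply/negP => xf; apply: isolated; exists f.
have [phi [range edges]] : colorable (Hypergraph (hV G :\ x) (hE G)) k.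
  apply: critical_proper_colorable; split.
    split; last by split=> //=; apply: subD1set.
    move=> f /= fE; have [fV f2] := critG.1 f fE; split=> //.
    apply/subsetP => y yf; rewrite in_setD1 (subsetP fV y yf) andbT.
    by apply: contraTneq yf => ->; apply: notin_edges.
  by move/(congr1 (@hV T))/setP/(_ x); rewrite /= setD11 xV.
apply: critical_not_colorable; exists (fun y => if y == x then 1 else phi y); split.
  move=> y yV; case: eqP => [_ | /eqP yx]; first by rewrite k_gt0.
  by apply: range; rewrite /= in_setD1 yx yV.
move=> f fE; apply: bichromatic_eq_in (edges f fE).
by move=> y yf /=; case: eqP => // eyx; move: yf; rewrite eyx (negbTE (notin_edges f fE)).
Qed.

End Critical.

End Colorings.

Definition swap_colors (a b n : nat) := if n == a then b else if n == b then a else n.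

Lemma swap_colorsK a b : involutive (swap_colors a b).
Proof.
move=> n; rewrite /swap_colors.
have [-> | na] := eqVneq n a.
  by have [-> // | ba] := eqVneq b a; rewrite eqxx.
have [-> | nb] := eqVneq n b; first by rewrite eqxx.
by rewrite (negbTE na) (negbTE nb).
Qed.

Lemma swap_colors_range a b k n :
  0 < a <= k -> 0 < b <= k -> 0 < n <= k -> 0 < swap_colors a b n <= k.
Proof. by rewrite /swap_colors; case: ifP => _ //; case: ifP. Qed.

Section Splitting.
Variables (T : finType) (G1 G2 : hypergraph T) (et : {set T}) (v : T).
Variable s : {set T} -> {set T}.
Implicit Types (e f g h : {set T}) (phi chi psi : T -> nat).
Local Notation G := (splitting G1 et G2 v s).

Definition lift_edge e := if v \in e then e :\ v :|: s e else e.

Lemma mem_lift_edge e x : x \in e -> x != v -> x \in lift_edge e.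
Proof.
by move=> xe xv; rewrite /lift_edge; case: ifP => // _; rewrite in_setU in_setD1 xv xe.
Qed.

Lemma splitting_edge_G1 g : g \in hE G1 -> g != et -> g \in hE G.
Proof. by move=> gE get; rewrite /= !inE gE get. Qed.

Lemma splitting_edge_lift e : e \in hE G2 -> lift_edge e \in hE G.
Proof.
rewrite /lift_edge => eE; case: ifP => ve; rewrite /= !inE.
  by apply/orP; right; apply/imsetP; exists e; rewrite // inE eE ve.
by rewrite eE ve orbT.
Qed.

Lemma splitting_edgeE g : g \in hE G ->
  (g \in hE G1 /\ g != et) \/ exists2 e, e \in hE G2 & g = lift_edge e.
Proof.
rewrite /= !inE => /orP[/orP[/andP[get gE] | /andP[gB gE]] | /imsetP[e]].
- by left.
- by right; exists g; rewrite // /lift_edge; move: gB; rewrite gE /= => /negbTE ->.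
- by rewrite /boundary inE => /andP[eE ve] ->; right; exists e; rewrite // /lift_edge ve.
Qed.

Hypothesis hypG1 : is_hypergraph G1.
Hypothesis hypG2 : is_hypergraph G2.
Hypothesis disjV : hV G1 :&: hV G2 = set0.
Hypothesis etE : et \in hE G1.
Hypothesis adm : admissible et G2 v s.

Lemma V1_notin_V2 x : x \in hV G1 -> (x \in hV G2) = false.
Proof. by move=> x1; apply/negP => x2; have := in_set0 x; rewrite -disjV inE x1 x2. Qed.

Lemma V2_notin_V1 x : x \in hV G2 -> (x \in hV G1) = false.
Proof. by move=> x2; apply: contraTF x2 => /V1_notin_V2 ->. Qed.

Lemma et_sub_V1 : et \subset hV G1.
Proof. by case: (hypG1 etE). Qed.

Lemma image_sub_et e : e \in hE G2 -> v \in e -> s e \subset et.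
Proof. by move=> eE ve; apply: (adm.1 e _).1; rewrite /boundary inE eE ve. Qed.

Lemma image_neq0 e : e \in hE G2 -> v \in e -> s e != set0.
Proof. by move=> eE ve; apply: (adm.1 e _).2; rewrite /boundary inE eE ve. Qed.

Lemma lift_edge_sub e : e \in hE G2 -> lift_edge e \subset (hV G2 :\ v) :|: et.
Proof.
move=> eE; have eV := subsetP (hypG2 eE).1; apply/subsetP => x.
rewrite /lift_edge in_setU in_setD1; case: ifP => ve.
  rewrite in_setU in_setD1 => /orP[/andP[-> /eV -> //] | xs].
  by rewrite (subsetP (image_sub_et eE ve) x xs) orbT.
by move=> xe; rewrite eV // andbT; apply/orP; left; apply: contraFneq ve => <-.
Qed.

Lemma lift_edge_meets_V2 e : e \in hE G2 -> exists2 y, y \in lift_edge e & y \in hV G2 :\ v.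
Proof.
move=> eE; have [eV /(exists_other v) [y ye yv]] := hypG2 eE.
by exists y; [apply: mem_lift_edge | rewrite in_setD1 yv (subsetP eV)].
Qed.

Lemma splitting_hypergraph : is_hypergraph G.
Proof.
move=> g /splitting_edgeE [[gE _] | [e eE ->]].
  by have [gV g2] := hypG1 gE; split=> //; apply: subset_trans gV (subsetUl _ _).
split.
  apply: subset_trans (lift_edge_sub eE) _; rewrite /= setUC.
  exact: setSU et_sub_V1.
rewrite /lift_edge; case: ifP => ve; last exact: (hypG2 eE).2.
have [y] := lift_edge_meets_V2 eE; rewrite /lift_edge ve => ylift /setD1P [_ yV2].
have /set0Pn [w ws] := image_neq0 eE ve.
have wV1 : w \in hV G1 by rewrite (subsetP et_sub_V1) // (subsetP (image_sub_et eE ve)).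
apply/card_gt1P; exists y, w; split=> //; first by rewrite in_setU ws orbT.
by apply: contraTneq yV2 => ->; rewrite V1_notin_V2.
Qed.

Lemma lift_edge_bichromatic phi chi e : e \in hE G2 ->
  {in hV G2 :\ v, phi =1 chi} -> {in et, forall w, phi w = chi v} ->
  bichromatic phi (lift_edge e) <-> bichromatic chi e.
Proof.
move=> eE eq_off_v eq_et; have eV := subsetP (hypG2 eE).1.
have eq_e x : x \in e -> x != v -> phi x = chi x.
  by move=> xe xv; rewrite eq_off_v // in_setD1 xv eV.
rewrite /lift_edge; case: ifP => ve; last first.
  have eq_in : {in e, phi =1 chi}.
    by move=> x xe; apply: eq_e => //; apply: contraFneq ve => <-.
  by split; apply: bichromatic_eq_in => // x /eq_in.
have sub_et := subsetP (image_sub_et eE ve).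
split; apply: bichromatic_transfer => x.
  rewrite in_setU in_setD1 => /orP[/andP[xv xe] | xs]; first by exists x; rewrite ?eq_e.
  by exists v; rewrite ?eq_et ?sub_et.
move=> xe; have [-> | xv] := eqVneq x v.
  have /set0Pn [w ws] := image_neq0 eE ve.
  by exists w; rewrite ?in_setU ?ws ?orbT ?eq_et ?sub_et.
by exists x; rewrite ?in_setU ?in_setD1 ?xv ?xe ?eq_e.
Qed.

Variable k : nat.
Hypothesis critG1 : critical G1 k.
Hypothesis critG2 : critical G2 k.

Lemma et_nonempty : exists x0, x0 \in et.
Proof. by case: (hypG1 etE) => _ /ltnW /card_gt0P. Qed.

Lemma splitting_not_colorable : ~ colorable G k.
Proof.
move=> [phi [range edges]].
have colG1 : is_coloring (del_edge G1 et) k phi.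
  split=> [x xV | g]; first by apply: range; rewrite /= in_setU xV.
  by rewrite in_setD1 => /andP[get gE]; apply/edges/splitting_edge_G1.
have [x0 x0et] := et_nonempty.
pose chi y := if y == v then phi x0 else phi y.
have off_v : {in hV G2 :\ v, phi =1 chi}.
  by move=> y /setD1P [yv _]; rewrite /chi (negbTE yv).
have on_et : {in et, forall w, phi w = chi v}.
  by move=> w wet; rewrite /chi eqxx (critical_monochromatic critG1 etE colG1 wet x0et).
apply: (critical_not_colorable critG2); exists chi; split.
  move=> y yV; rewrite /chi; case: eqP => [_ | /eqP yv]; apply: range; rewrite /= in_setU.
    by rewrite (subsetP et_sub_V1 x0 x0et).
  by rewrite in_setD1 yv yV orbT.
by move=> e eE; apply/(lift_edge_bichromatic eE off_v on_et)/edges/splitting_edge_lift.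
Qed.

Lemma splitting_edge_not_sub_et g : g \in hE G -> ~~ (g \subset et).
Proof.
move=> /splitting_edgeE [[gE get] | [e eE ->]].
  by apply: contra get => /(critical_edges_antichain critG1 gE etE) ->.
have [y ylift /setD1P [_ yV2]] := lift_edge_meets_V2 eE.
apply/subsetPn; exists y => //.
by apply: contraTN yV2 => /(subsetP et_sub_V1) /V1_notin_V2 ->.
Qed.

Lemma splitting_covered x : 0 < k -> x \in hV G -> exists2 f, f \in hE G & x \in f.
Proof.
move=> k_gt0; rewrite /= in_setU => /orP[x1 | /setD1P [xv x2]].
  have [f fE xf] := critical_no_isolated critG1 k_gt0 x1.
  have [fet | fnet] := eqVneq f et; last by exists f; rewrite ?splitting_edge_G1.
  have /bigcupP [e] : x \in \bigcup_(e in boundary G2 v) s e by rewrite adm.2 -fet.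
  rewrite /boundary inE => /andP[eE ve] xs.
  by exists (lift_edge e); rewrite ?splitting_edge_lift // /lift_edge ve in_setU xs orbT.
have [f fE xf] := critical_no_isolated critG2 k_gt0 x2.
by exists (lift_edge f); [apply: splitting_edge_lift | apply: mem_lift_edge].
Qed.

Hypothesis vV : v \in hV G2.

Lemma splitting_del_lift_edge_colorable h :
  h \in hE G2 -> colorable (del_edge G (lift_edge h)) k.
Proof.
move=> hE2; have [phi2 [range2 edges2]] := critical_del_edge_colorable critG2 hE2.
have [phi1 col1] := critical_del_edge_colorable critG1 etE; have [range1 edges1] := col1.
have [x0 x0et] := et_nonempty; have x0V1 := subsetP et_sub_V1 x0 x0et.
pose psi x := if x \in hV G1 then swap_colors (phi1 x0) (phi2 v) (phi1 x) else phi2 x.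
have off_v : {in hV G2 :\ v, psi =1 phi2}.
  by move=> x /setD1P [_ x2]; rewrite /psi V2_notin_V1.
have on_et : {in et, forall w, psi w = phi2 v}.
  move=> w wet; rewrite /psi (subsetP et_sub_V1 w wet).
  by rewrite (critical_monochromatic critG1 etE col1 wet x0et) /swap_colors eqxx.
exists psi; split.
  move=> x; rewrite /= in_setU /psi; case: ifP => [x1 _ | _ /setD1P [_ /range2] //].
  by apply: swap_colors_range; [apply: range1 | apply: range2 | apply: range1].
move=> g; rewrite /= in_setD1 => /andP[gh gE].
have [[gE1 get] | [e eE ge]] := splitting_edgeE gE.
  apply: (bichromatic_comp (inv_inj (swap_colorsK _ _))) (edges1 g _).
    by move=> x /(subsetP (hypG1 gE1).1) x1; rewrite /psi x1.
  by rewrite in_setD1 get.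
rewrite ge in gh *; apply/(lift_edge_bichromatic eE off_v on_et)/edges2.
by rewrite in_setD1 eE andbT; apply: contraNneq gh => ->.
Qed.

Hypothesis extend : forall phi : T -> nat,
  is_coloring (induced G et) k phi ->
  2 <= size (undup [seq phi x | x <- enum et]) ->
  exists phi' : T -> nat,
    is_coloring (induced G ((hV G2 :\ v) :|: et)) k phi' /\ forall x, x \in et -> phi' x = phi x.

Lemma splitting_del_G1_edge_colorable f :
  f \in hE G1 -> f != et -> colorable (del_edge G f) k.
Proof.
move=> fE fet; have [phi1 [range1 edges1]] := critical_del_edge_colorable critG1 fE.
have col_et : is_coloring (induced G et) k phi1.
  split=> [x /(subsetP et_sub_V1) /range1 // | g].
  by rewrite /= inE => /andP[/splitting_edge_not_sub_et/negP].
have et_bichromatic : bichromatic phi1 et by apply: edges1; rewrite in_setD1 eq_sym fet.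
have [phi2 [[range2 edges2] agree]] := extend col_et (bichromatic_undup_size et_bichromatic).
pose psi x := if x \in hV G1 then phi1 x else phi2 x.
have on_V2' : {in (hV G2 :\ v) :|: et, psi =1 phi2}.
  move=> x; rewrite /psi; case: ifP => // x1.
  by rewrite in_setU in_setD1 V1_notin_V2 // andbF /= => /agree ->.
exists psi; split.
  move=> x; rewrite /= in_setU /psi; case: ifP => [x1 _ | _ /= xV2]; first exact: range1.
  by apply: range2; rewrite /= in_setU xV2.
move=> g; rewrite /= in_setD1 => /andP[gf gE].
have [[gE1 get] | [e eE ge]] := splitting_edgeE gE.
  apply: bichromatic_eq_in (edges1 g _); last by rewrite in_setD1 gf.
  by move=> x /(subsetP (hypG1 gE1).1) x1; rewrite /psi x1.
have gsub : g \subset (hV G2 :\ v) :|: et by rewrite ge lift_edge_sub.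
apply: bichromatic_eq_in (edges2 g _); last by rewrite /= inE gE gsub.
by move=> x /(subsetP gsub) /on_V2' ->.
Qed.

End Splitting.

Theorem theorem17 (T : finType) (k : nat) (G1 G2 : hypergraph T)
    (et : {set T}) (v : T) (s : {set T} -> {set T}) :
  2 <= k ->
  hV G1 :&: hV G2 = set0 ->
  critical G1 k ->
  critical G2 k ->
  et \in hE G1 ->
  v \in hV G2 ->
  admissible et G2 v s ->
  (forall phi : T -> nat,
     is_coloring (induced (splitting G1 et G2 v s) et) k phi ->
     2 <= size (undup [seq phi x | x <- enum et]) ->
     exists phi' : T -> nat,
       is_coloring (induced (splitting G1 et G2 v s) ((hV G2 :\ v) :|: et)) k phi'
       /\ forall x, x \in et -> phi' x = phi x) ->
  critical (splitting G1 et G2 v s) k.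
Proof.
move=> k_ge2 disjV critG1 critG2 etE vV adm extend.
have [hypG1 hypG2] := (critG1.1, critG2.1).
apply: critical_of_del_edge_colorable.
- exact: (splitting_hypergraph hypG1 hypG2 disjV etE adm).
- exact: (splitting_not_colorable hypG1 hypG2 etE adm critG1 critG2).
- by move=> x; apply: (splitting_covered adm critG1 critG2); apply: leq_trans k_ge2.
move=> f /splitting_edgeE [[fE fet] | [h hE ->]].
  exact: (splitting_del_G1_edge_colorable hypG1 hypG2 disjV etE adm critG1 extend).
exact: (splitting_del_lift_edge_colorable hypG1 hypG2 disjV etE adm critG1 critG2 vV).
Qed.
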